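(* There exists a non-empty Zariski open subset $\mathcal{U}$ of $\mathrm{GL}_2(\mathbb{C})^2$ such that for every Fibonacci sequence $(\mathbf{w}_i)_{i\ge0}$ in $\mathrm{GL}_2(\mathbb{C})$ with $(\mathbf{w}_0,\mathbf{w}_1)\in\mathcal{U}$ there exists $N\in\mathrm{GL}_2(\mathbb{C})$ such that the matrix $\mathbf{y}_i$, defined by $\mathbf{y}_i=\mathbf{w}_iN$ if $i$ is even and $\mathbf{y}_i=\mathbf{w}_i\,{}^tN$ if $i$ is odd, is symmetric for every $i\ge0$. Moreover, for any Fibonacci sequence $(\mathbf{w}_i)_{i\ge0}$ in $\mathrm{GL}_2(\mathbb{C})$, any $N\in\mathrm{GL}_2(\mathbb{C})$ such that $\mathbf{w}_0N$, $\mathbf{w}_1\,{}^tN$ and $\mathbf{w}_1\mathbf{w}_0N$ are symmetric has this property. Finally, when $(\mathbf{w}_0,\mathbf{w}_1)\in\mathcal{U}$ and $\mathbf{w}_0,\mathbf{w}_1$ have integer coefficients, such an $N$ may be chosen with integer coefficients.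
   Context: A Fibonacci sequence in a monoid is a sequence $(\mathbf{w}_i)_{i\ge0}$ with $\mathbf{w}_{i+2}=\mathbf{w}_{i+1}\mathbf{w}_i$ for all $i\ge0$. ${}^tN$ denotes the transpose of $N$. *)

(* with mathcomp-analysis's [realType] and real-closed's
   [complex]: for R : realType, R[i] is the field of complex numbers. *)
From HB Require Import structures.
From mathcomp Require Import all_boot all_order all_algebra.
From mathcomp Require Import reals.
From mathcomp Require Import complex.
From mathcomp Require Import mpoly.
Set Implicit Arguments.
Unset Strict Implicit.
Unset Printing Implicit Defensive.
Import GRing.Theory Num.Theory.
Local Open Scope ring_scope.

(* The 8 affine coordinates of a pair of 2x2 matrices (A, B):
   k = 0..3 -> entries of A (row-major), k = 4..7 -> entries of B. *)
Definition coords8 {F : nzRingType} (A B : 'M[F]_2) : 'I_8 -> F :=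
  fun k => let j := (k %% 4)%N in
           let r : 'I_2 := inord (j %/ 2) in
           let c : 'I_2 := inord (j %% 2) in
           if (k < 4)%N then A r c else B r c.

(* Zariski open subsets of GL_2(F) x GL_2(F) (a principal open subset of
   F^8, viewed as a closed subvariety of F^8 x F given by det A det B t = 1):
   U is the complement, inside GL_2(F)^2, of the common zero locus of a
   finite family of polynomials in the 8 matrix entries. *)
Definition zariski_open_GL2sq {F : fieldType} (U : 'M[F]_2 -> 'M[F]_2 -> Prop) :=
  exists ps : seq {mpoly F[8]},
    forall A B : 'M[F]_2,
      U A B <-> [/\ A \in unitmx, B \in unitmx &
                    has (fun p => p.@[coords8 A B] != 0) ps].

Definition fib_GL2 {F : fieldType} (w : nat -> 'M[F]_2) :=
  (forall i, w i \in unitmx) /\ (forall i, w i.+2 = w i.+1 *m w i).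

Definition symmetric_mx {F : nzRingType} (A : 'M[F]_2) := A^T = A.

Definition ymx {F : nzRingType} (w : nat -> 'M[F]_2) (N : 'M[F]_2) (i : nat) :=
  if odd i then w i *m N^T else w i *m N.

Definition int_mx {F : nzRingType} (A : 'M[F]_2) :=
  exists Z : 'M[int]_2, A = map_mx (fun z : int => z%:~R) Z.

(* The conditions that w0 N, w1 tN and w1 w0 N be symmetric are three linear
   forms in the entries of N, so the generalized cross product of their
   coefficient rows (the signed 3x3 minors of a 3x4 matrix) satisfies all
   three.  It is polynomial in the entries of w0 and w1, hence integral when
   they are, and U is where its determinant does not vanish.
   Symmetry then propagates along the sequence: if y_k and y_(k+1) are
   symmetric then so is y_(k+3), since for k even
     w_(k+3) tN = w_(k+1) w_k w_(k+1) tN = w_(k+1) (w_k N) t(w_(k+1))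
   by w_(k+1) tN = N t(w_(k+1)); for k odd exchange N and tN. *)
From HB Require Import structures.
From mathcomp Require Import all_boot all_order all_algebra.
From mathcomp Require Import reals complex mpoly ring.
Set Implicit Arguments.
Unset Strict Implicit.
Unset Printing Implicit Defensive.
Import GRing.Theory Num.Theory.
Local Open Scope ring_scope.

Section Matrix22.
Variable R : nzRingType.

Definition mk2 (a b c d : R) : 'M[R]_2 :=
  \matrix_(i < 2, j < 2) if val i == 0%N then (if val j == 0%N then a else b)
                          else (if val j == 0%N then c else d).

Lemma ord2P (i : 'I_2) : i = 0 \/ i = 1.
Proof. by case: i => [[|[|i]] Hi]; [left|right|]; try exact: val_inj. Qed.

Lemma big_ord2 (F : 'I_2 -> R) : \sum_(i < 2) F i = F 0 + F 1.
Proof.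
rewrite !(big_ord_recr, big_ord0) /= add0r; congr (F _ + F _); exact: val_inj.
Qed.

Lemma symmetric_mx_offdiag (M : 'M[R]_2) : M 0 1 = M 1 0 -> symmetric_mx M.
Proof.
move=> M01; apply/matrixP=> i j; rewrite mxE.
by case: (ord2P i) => ->; case: (ord2P j) => ->.
Qed.

Lemma mul_mk2 (a b c d e f g h : R) :
  mk2 a b c d *m mk2 e f g h = mk2 (a*e+b*g) (a*f+b*h) (c*e+d*g) (c*f+d*h).
Proof.
apply/matrixP=> i j; rewrite !mxE big_ord2 !mxE.
by case: (ord2P i) => ->; case: (ord2P j) => ->.
Qed.

Lemma mk2_1 : mk2 1 0 0 1 = 1%:M.
Proof.
apply/matrixP=> i j; rewrite !mxE.
by case: (ord2P i) => ->; case: (ord2P j) => ->.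
Qed.

End Matrix22.

Lemma map_mk2 (R S : nzRingType) (f : {rmorphism R -> S}) (a b c d : R) :
  map_mx f (mk2 a b c d) = mk2 (f a) (f b) (f c) (f d).
Proof. by apply/matrixP=> i j; rewrite !mxE; case: ifP; case: ifP. Qed.

Section Cross4.
Variable R : comNzRingType.

Definition det3 (a b c d e f g h k : R) : R :=
  a * (e * k - f * h) - b * (d * k - f * g) + c * (d * h - e * g).

(* The generalized cross product of (x0..x3), (y0..y3), (z0..z3), stored
   row-major in a 2x2 matrix. *)
Definition cross4 (x0 x1 x2 x3 y0 y1 y2 y3 z0 z1 z2 z3 : R) : 'M[R]_2 :=
  mk2 (det3 x1 x2 x3 y1 y2 y3 z1 z2 z3) (- det3 x0 x2 x3 y0 y2 y3 z0 z2 z3)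
      (det3 x0 x1 x3 y0 y1 y3 z0 z1 z3) (- det3 x0 x1 x2 y0 y1 y2 z0 z1 z2).

(* The arguments of cross4 are the coefficient rows, in the entries
   (n00, n01, n10, n11) of N, of the linear forms (A N) 0 1 - (A N) 1 0,
   (B tN) 0 1 - (B tN) 1 0 and (B A N) 0 1 - (B A N) 1 0. *)
Definition symmetrizer (A B : 'M[R]_2) : 'M[R]_2 :=
  cross4 (- A 1 0) (A 0 0) (- A 1 1) (A 0 1)
         (- B 1 0) (- B 1 1) (B 0 0) (B 0 1)
         (- (B *m A) 1 0) ((B *m A) 0 0) (- (B *m A) 1 1) ((B *m A) 0 1).

Lemma symmetrizer_sym (A B : 'M[R]_2) :
  [/\ symmetric_mx (A *m symmetrizer A B),
      symmetric_mx (B *m (symmetrizer A B)^T) &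
      symmetric_mx (B *m A *m symmetrizer A B)].
Proof.
split; apply: symmetric_mx_offdiag;
  rewrite /symmetrizer /cross4 /det3 !mxE !big_ord2 !mxE /= ?big_ord2 ?mxE /=;
  ring.
Qed.

End Cross4.

Lemma rmorph_det3 (R S : comNzRingType) (f : {rmorphism R -> S}) a b c d e g h k l :
  f (det3 a b c d e g h k l) =
  det3 (f a) (f b) (f c) (f d) (f e) (f g) (f h) (f k) (f l).
Proof. by rewrite /det3 !(rmorphB, rmorphD, rmorphM). Qed.

Lemma map_symmetrizer (R S : comNzRingType) (f : {rmorphism R -> S}) A B :
  map_mx f (symmetrizer A B) = symmetrizer (map_mx f A) (map_mx f B).
Proof.
rewrite /symmetrizer -map_mxM /cross4 map_mk2 !rmorphN !rmorph_det3 !rmorphN.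
by rewrite !mxE.
Qed.

Lemma symmetrizer_witness_unitmx (R : comUnitRingType) :
  [/\ mk2 (0 : R) 1 1 0 \in unitmx, mk2 (0 : R) 1 1 1 \in unitmx &
      symmetrizer (mk2 (0 : R) 1 1 0) (mk2 0 1 1 1) \in unitmx].
Proof.
have unit_inv (M M' : 'M[R]_2) : M' *m M = 1%:M -> M *m M' = 1%:M -> M \in unitmx.
  by move=> M'M MM'; apply: (intro_unitmx (conj M'M MM')).
have -> : symmetrizer (mk2 0 1 1 0) (mk2 0 1 1 1) = mk2 (1 : R) 0 (-1) 1.
  by rewrite /symmetrizer mul_mk2 /cross4 /det3 !mxE /=; congr mk2; ring.
split; [apply: (unit_inv _ (mk2 0 1 1 0)) | apply: (unit_inv _ (mk2 (-1) 1 1 0))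
       | apply: (unit_inv _ (mk2 1 0 1 1))];
  by rewrite mul_mk2 -mk2_1; congr mk2; ring.
Qed.

Section Propagation.
Variable R : comNzRingType.

Lemma symmetric_mx_congr n (P S : 'M[R]_n) :
  S^T = S -> (P *m S *m P^T)^T = P *m S *m P^T.
Proof. by move=> symS; rewrite !trmx_mul trmxK symS mulmxA. Qed.

Lemma symmetric_mx_mulmx_ABA n (A B N : 'M[R]_n) :
  (A *m N)^T = A *m N -> (B *m N^T)^T = B *m N^T ->
  (B *m A *m B *m N^T)^T = B *m A *m B *m N^T.
Proof.
move=> symAN symBN; have BNt : B *m N^T = N *m B^T.
  by rewrite -symBN trmx_mul trmxK.
rewrite -!mulmxA BNt !mulmxA -(mulmxA B).
exact: symmetric_mx_congr.
Qed.

Lemma nat_ind3 (P : nat -> Prop) :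
  P 0%N -> P 1%N -> P 2%N -> (forall k, P k -> P k.+1 -> P k.+3) ->
  forall k, P k.
Proof.
move=> P0 P1 P2 PS k; suff: [/\ P k, P k.+1 & P k.+2] by case.
by elim: k => [|k [Pk Pk1 Pk2]]; split; last exact: PS.
Qed.

Lemma ymx_sym (w : nat -> 'M[R]_2) (N : 'M[R]_2) :
  (forall i, w i.+2 = w i.+1 *m w i) ->
  symmetric_mx (w 0%N *m N) -> symmetric_mx (w 1%N *m N^T) ->
  symmetric_mx (w 1%N *m w 0%N *m N) ->
  forall k, symmetric_mx (ymx w N k).
Proof.
move=> wS sym0 sym1 sym2; apply: nat_ind3; rewrite /ymx /= ?wS //.
move=> k; rewrite /= !wS !negbK; case: (odd k) => /= symk symk1.
- by rewrite -[N]trmxK; apply: symmetric_mx_mulmx_ABA; rewrite ?trmxK.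
- exact: symmetric_mx_mulmx_ABA.
Qed.

End Propagation.

Section GenericMatrices.
Variable F : fieldType.

Definition genericA : 'M[{mpoly F[8]}]_2 :=
  \matrix_(i < 2, j < 2) 'X_(inord (2 * i + j)).
Definition genericB : 'M[{mpoly F[8]}]_2 :=
  \matrix_(i < 2, j < 2) 'X_(inord (4 + 2 * i + j)).

Definition symmetrizer_det : {mpoly F[8]} :=
  \det (symmetrizer genericA genericB).

Lemma meval_genericA (A B : 'M[F]_2) :
  map_mx (meval (coords8 A B)) genericA = A.
Proof.
apply/matrixP=> i j; rewrite !mxE mevalXU /coords8.
by case: (ord2P i) => ->; case: (ord2P j) => ->;
  rewrite inordK //=; congr (A _ _); apply/val_inj; rewrite /= inordK.
Qed.

Lemma meval_genericB (A B : 'M[F]_2) :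
  map_mx (meval (coords8 A B)) genericB = B.
Proof.
apply/matrixP=> i j; rewrite !mxE mevalXU /coords8.
by case: (ord2P i) => ->; case: (ord2P j) => ->;
  rewrite inordK //=; congr (B _ _); apply/val_inj; rewrite /= inordK.
Qed.

Lemma symmetrizer_detE (A B : 'M[F]_2) :
  symmetrizer_det.@[coords8 A B] = \det (symmetrizer A B).
Proof.
by rewrite /symmetrizer_det -det_map_mx map_symmetrizer
           meval_genericA meval_genericB.
Qed.

End GenericMatrices.

Theorem proposition3p1 (R : realType) :
  exists U : 'M[R[i]]_2 -> 'M[R[i]]_2 -> Prop,
    [/\ zariski_open_GL2sq U,
        (exists A B, U A B),
        (forall w : nat -> 'M[R[i]]_2, fib_GL2 w -> U (w 0%N) (w 1%N) ->
           exists N : 'M[R[i]]_2, N \in unitmx /\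
             forall k, symmetric_mx (ymx w N k)),
        (forall (w : nat -> 'M[R[i]]_2) (N : 'M[R[i]]_2), fib_GL2 w ->
           N \in unitmx ->
           symmetric_mx (w 0%N *m N) ->
           symmetric_mx (w 1%N *m N^T) ->
           symmetric_mx (w 1%N *m w 0%N *m N) ->
           forall k, symmetric_mx (ymx w N k)) &
        (forall w : nat -> 'M[R[i]]_2, fib_GL2 w -> U (w 0%N) (w 1%N) ->
           int_mx (w 0%N) -> int_mx (w 1%N) ->
           exists N : 'M[R[i]]_2, [/\ N \in unitmx, int_mx N &
             forall k, symmetric_mx (ymx w N k)])].
Proof.
pose U (A B : 'M[R[i]]_2) := [/\ A \in unitmx, B \in unitmx &
   has (fun p => p.@[coords8 A B] != 0) [:: symmetrizer_det R[i]]].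
have unitN A B : U A B = [/\ A \in unitmx, B \in unitmx & symmetrizer A B \in unitmx].
  by rewrite /U /= orbF symmetrizer_detE unitmxE unitfE.
pose N (w : nat -> 'M[R[i]]_2) := symmetrizer (w 0%N) (w 1%N).
have symN w : fib_GL2 w -> forall k, symmetric_mx (ymx w (N w) k).
  by case=> _ wS; have [] := symmetrizer_sym (w 0%N) (w 1%N); exact: ymx_sym.
exists U; split.
- by exists [:: symmetrizer_det R[i]].
- by exists (mk2 0 1 1 0), (mk2 0 1 1 1); rewrite unitN; exact: symmetrizer_witness_unitmx.
- by move=> w fw; rewrite unitN => -[_ _ uN]; exists (N w); split; last exact: symN.
- by move=> w N' [_ wS] _; apply: ymx_sym.
- move=> w fw; rewrite unitN => -[_ _ uN] [Z0 E0] [Z1 E1].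
  exists (N w); split=> //; last exact: symN.
  by exists (symmetrizer Z0 Z1); rewrite /N E0 E1 map_symmetrizer.
Qed.
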